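(* Let $\Gamma$ be a quantum graph with an action of a finite group $K$ (no element mapping a vertex to an adjacent vertex) and let $R$ be a finite-dimensional complex representation of $K$. Then any two quantum graphs $\Gamma/R$ obtained by the recipe below, with possibly different choices of global basis, orbit representatives and edge bases, are transplantable.
   Context: Quantum graphs. A quantum graph $\Gamma$ has a finite vertex set $V$ and finite edge set $E$; each edge $e$ has length $l_e>0$ and a coordinate identifying it with $[0,l_e]$. Functions are tuples $f=(f|_e)$, $f|_e\in W^{2,2}([0,l_e])$. At a vertex $v$ of degree $d_v$ the conditions are $A_vf|_v+B_vf'|_v=0$, where $A_v,B_v$ are complex matrices with $d_v$ columns indexed by the incident edges, $f|_v$ is the vector of values at $v$ and $f'|_v$ the vector of outgoing derivatives at $v$. $\Phi_\Gamma(\lambda)$ denotes the space of functions satisfying all vertex conditions with $-f''=\lambda f$ on each edge. Transplantation. Quantum graphs $\Gamma_1,\Gamma_2$ are transplantable if there is a complex matrix $T=(T_{e,e'})_{e\in E(\Gamma_2),\,e'\in E(\Gamma_1)}$ with $T_{e,e'}=0$ whenever $l_e\ne l_{e'}$ such that for every $\lambda\in\mathbb{C}$ the map $f\mapsto\varphi$, $\varphi|_e=\sum_{e'}T_{e,e'}f|_{e'}$ (as functions on $[0,l_e]$ in the edge coordinates), is a linear bijection $\Phi_{\Gamma_1}(\lambda)\to\Phi_{\Gamma_2}(\lambda)$. Setting. $K$ is a finite group acting on $\Gamma$ (permuting vertices and edges, preserving incidence and lengths, mapping edges isometrically, preserving vertex conditions), acting on functions by $(gf)(x)=f(g^{-1}x)$;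 assume no element of $K$ maps a vertex to a vertex adjacent to it. $K_x$ denotes the stabilizer of a vertex or edge $x$. $R$ is a $d$-dimensional complex representation of $K$ with homomorphism $\rho_R:K\to GL(V^R)$. For bases $C=(c_1,\dots,c_d)$, $C'$ of $V^R$ and linear $T$, $[T]^{C}_{C'}$ is the matrix whose $j$-th column is the $C'$-coordinate vector of $T(c_j)$. Recipe for $\Gamma/R$. Choose: a global basis $B$ of $V^R$; representatives $\tilde e^1,\dots,\tilde e^I$ of the $K$-orbits on $E$ and $\tilde v_1,\dots,\tilde v_N$ of the $K$-orbits on $V$; for each $i$ a basis $B^i=(b^i_1,\dots,b^i_d)$ of $V^R$ such that $b^i_1,\dots,b^i_{d_i}$ is a basis of the subspace of vectors fixed by $\rho_R(K_{\tilde e^i})$ and $b^i_{d_i+1},\dots,b^i_d$ is a basis of the sum of the nontrivial isotypic components of $R$ restricted to $K_{\tilde e^i}$. The quotient has vertices $v_1,\dots,v_N$ and edges $e^i_j$ ($1\le i\le I$, $1\le j\le d_i$), $e^i_j$ of length $l_{\tilde e^i}$ with the coordinate of $\tilde e^i$; if $\tilde e^i$ joins a vertex of the orbit of $\tilde v_k$ to one of the orbit of $\tilde v_{k'}$, then each $e^i_j$ joins $v_k$ to $v_{k'}$, endpoints corresponding. Vertex conditions at $v_k$: write the edges at $\tilde v_k$ as $g_1\tilde e^{\nu_1},\dots,g_n\tilde e^{\nu_n}$ ($g_l\in K$, $n=d_{\tilde v_k}$) and let $A_{\tilde v_k},B_{\tilde v_k}$ be its condition matrices with columns in this order; let $\mu_1,\dots,\mu_m$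 be the distinct values among the $\nu_l$; let $\Theta'$ be the $n\times m$ matrix with $\Theta'_{l,l'}=1$ if $\nu_l=\mu_{l'}$ and $0$ otherwise; let $\Theta$ be obtained from $\Theta'\otimes I_d$ by deleting the columns $(l'-1)d+j$ with $d_{\mu_{l'}}<j\le d$ (the remaining columns, indexed by $(l',j)$ with $j\le d_{\mu_{l'}}$, correspond to the edges $e^{\mu_{l'}}_j$ at $v_k$). With $D=\mathrm{diag}\big(([\rho_R(g_1^{-1})]^{B}_{B^{\nu_1}})^T,\dots,([\rho_R(g_n^{-1})]^{B}_{B^{\nu_n}})^T\big)$, set $A_{v_k}=(A_{\tilde v_k}\otimes I_d)D\Theta$, $B_{v_k}=(B_{\tilde v_k}\otimes I_d)D\Theta$ (possibly non-square); the conditions at $v_k$ are $A_{v_k}f|_{v_k}+B_{v_k}f'|_{v_k}=0$. *)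

From Stdlib Require Import Reals.
From HB Require Import structures.
From mathcomp Require Import all_boot fingroup.

Set Implicit Arguments.
Unset Strict Implicit.
Unset Printing Implicit Defensive.

Record C := mkC { Re : R ; Im : R }.

Definition C0 : C := mkC R0 R0.
Definition C1 : C := mkC R1 R0.
Definition Cadd (z w : C) : C := mkC (Rplus (Re z) (Re w)) (Rplus (Im z) (Im w)).
Definition Copp (z : C) : C := mkC (Ropp (Re z)) (Ropp (Im z)).
Definition Csub (z w : C) : C := Cadd z (Copp w).
Definition Cmul (z w : C) : C :=
  mkC (Rminus (Rmult (Re z) (Re w)) (Rmult (Im z) (Im w)))
      (Rplus (Rmult (Re z) (Im w)) (Rmult (Im z) (Re w))).
Definition CscaleR (r : R) (z : C) : C := mkC (Rmult r (Re z)) (Rmult r (Im z)).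
Definition Cmod (z : C) : R := sqrt (Rplus (Rsqr (Re z)) (Rsqr (Im z))).

Definition Csum (T : finType) (P : pred T) (F : T -> C) : C :=
  \big[Cadd/C0]_(x | P x) F x.

Definition has_deriv_within (a b : R) (f : R -> C) (x : R) (df : C) : Prop :=
  forall eps : R, Rlt R0 eps ->
  exists delta : R, Rlt R0 delta /\
    forall h : R, h <> R0 -> Rlt (Rabs h) delta ->
      Rle a (Rplus x h) -> Rle (Rplus x h) b ->
      Rlt (Cmod (Csub (CscaleR (Rinv h) (Csub (f (Rplus x h)) (f x))) df)) eps.

(* Edge e has coordinate [0, qlen e]; coordinate 0 sits at qsrc e and        *)
(* coordinate qlen e at qtgt e.  An "end" of an edge is a pair (e, s) with   *)
(* s = false the 0-end and s = true the qlen-end.  The vertex conditions at  *)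
(* v are matrices qA v, qB v with rows indexed by the finite type qRow v and *)
(* columns indexed by the edge ends incident to v (entries for ends not      *)
(* incident to v are ignored).                                               *)
Record qgraph := QGraph {
  qV : finType ;
  qE : finType ;
  qsrc : qE -> qV ;
  qtgt : qE -> qV ;
  qlen : qE -> R ;
  qlen_pos : forall e, Rlt R0 (qlen e) ;
  qRow : qV -> finType ;
  qA : forall v, qRow v -> qE -> bool -> C ;
  qB : forall v, qRow v -> qE -> bool -> C }.

Definition endpt (G : qgraph) (e : qE G) (s : bool) : qV G :=
  if s then qtgt e else qsrc e.

(* The boundary data (a = values, b = outgoing derivatives, both indexed by
   edge ends) satisfy the vertex conditions at v: A_v a|_v + B_v b|_v = 0. *)
Definition sat_at (G : qgraph) (v : qV G) (a b : qE G -> bool -> C) : Prop :=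
  forall r : qRow v,
    Csum (fun es : (qE G * bool)%type => endpt es.1 es.2 == v)
         (fun es => Cadd (Cmul (qA r es.1 es.2) (a es.1 es.2))
                         (Cmul (qB r es.1 es.2) (b es.1 es.2))) = C0.

(* functions on the graph: one complex function per edge, considered on
   [0, qlen e] in the edge coordinate *)
Definition gfun (G : qgraph) := qE G -> R -> C.

Definition in_edge (G : qgraph) (e : qE G) (x : R) : Prop :=
  Rle R0 x /\ Rle x (qlen e).

Definition bval (G : qgraph) (F : gfun G) (e : qE G) (s : bool) : C :=
  if s then F e (qlen e) else F e R0.
(* outgoing derivative at the end (e,s), given the derivative F' *)
Definition dval (G : qgraph) (F' : gfun G) (e : qE G) (s : bool) : C :=
  if s then Copp (F' e (qlen e)) else F' e R0.

Definition Phi (G : qgraph) (lam : C) (F : gfun G) : Prop :=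
  exists F' F'' : gfun G,
    (forall e x, in_edge e x ->
       has_deriv_within R0 (qlen e) (F e) x (F' e x) /\
       has_deriv_within R0 (qlen e) (F' e) x (F'' e x) /\
       F'' e x = Copp (Cmul lam (F e x))) /\
    (forall v : qV G, sat_at v (bval F) (dval F')).

Arguments Phi G lam F : clear implicits.

Definition feq (G : qgraph) (F1 F2 : gfun G) : Prop :=
  forall e x, in_edge e x -> F1 e x = F2 e x.

Definition transplant (G1 G2 : qgraph) (T : qE G2 -> qE G1 -> C) (F : gfun G1)
  : gfun G2 :=
  fun e x => Csum predT (fun e' => Cmul (T e e') (F e' x)).

Definition transplantable (G1 G2 : qgraph) : Prop :=
  exists T : qE G2 -> qE G1 -> C,
    (forall e e', qlen e <> qlen e' -> T e e' = C0) /\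
    forall lam : C,
      (forall F, Phi G1 lam F -> Phi G2 lam (transplant T F)) /\
      (forall F1 F2, Phi G1 lam F1 -> Phi G1 lam F2 ->
         feq (transplant T F1) (transplant T F2) -> feq F1 F2) /\
      (forall P, Phi G2 lam P -> exists F, Phi G1 lam F /\ feq (transplant T F) P).

Definition is_qaction (G : qgraph) (K : finGroupType)
    (aV : K -> qV G -> qV G) (aE : K -> qE G -> qE G) : Prop :=
  (forall v, aV 1%g v = v) /\ (forall g h v, aV (g * h)%g v = aV g (aV h v)) /\
  (forall e, aE 1%g e = e) /\ (forall g h e, aE (g * h)%g e = aE g (aE h e)) /\
  (* incidence (and edge coordinates) preserved *)
  (forall g e, qsrc (aE g e) = aV g (qsrc e)) /\
  (forall g e, qtgt (aE g e) = aV g (qtgt e)) /\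
  (forall g e, qlen (aE g e) = qlen e) /\
  (forall g v (a b : qE G -> bool -> C),
     sat_at v a b <->
     sat_at (aV g v) (fun e s => a (aE (g^-1)%g e) s) (fun e s => b (aE (g^-1)%g e) s)).

Definition no_adjacent_map (G : qgraph) (K : finGroupType) (aV : K -> qV G -> qV G) :=
  forall (g : K) (e : qE G), aV g (qsrc e) <> qtgt e /\ aV g (qtgt e) <> qsrc e.

Definition vec (d : nat) := 'I_d -> C.
Definition mat (d : nat) := 'I_d -> 'I_d -> C.

Definition mxv (d : nat) (M : mat d) (v : vec d) : vec d :=
  fun i => Csum predT (fun j => Cmul (M i j) (v j)).

Definition vzero (d : nat) : vec d := fun _ => C0.
Definition vadd (d : nat) (u v : vec d) : vec d := fun i => Cadd (u i) (v i).
Definition vscale (d : nat) (c : C) (v : vec d) : vec d := fun i => Cmul c (v i).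

Definition lincomb (d m : nat) (J : pred 'I_m) (c : 'I_m -> C) (b : 'I_m -> vec d)
  : vec d := fun i => Csum J (fun j => Cmul (c j) (b j i)).

Definition is_rep (K : finGroupType) (d : nat) (rho : K -> mat d) : Prop :=
  (forall i j, rho 1%g i j = if i == j then C1 else C0) /\
  (forall g h i k, rho (g * h)%g i k = Csum predT (fun j => Cmul (rho g i j) (rho h j k))).

Definition is_subspace (d : nat) (P : vec d -> Prop) : Prop :=
  P (@vzero d) /\ (forall u v, P u -> P v -> P (vadd u v)) /\
  (forall c v, P v -> P (vscale c v)).

Section RepDefs.
Variables (K : finGroupType) (d : nat) (rho : K -> mat d).

Definition invariant (H : K -> Prop) (P : vec d -> Prop) : Prop :=
  forall h v, H h -> P v -> P (mxv (rho h) v).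

Definition irreducible_sub (H : K -> Prop) (P : vec d -> Prop) : Prop :=
  is_subspace P /\ invariant H P /\ (exists v, P v /\ exists i, v i <> C0) /\
  forall Q : vec d -> Prop, is_subspace Q -> invariant H Q -> (forall v, Q v -> P v) ->
    (forall v, Q v -> forall i, v i = C0) \/ (forall v, P v -> Q v).

Definition nontrivial_on (H : K -> Prop) (P : vec d -> Prop) : Prop :=
  exists h v, H h /\ P v /\ exists i, mxv (rho h) v i <> v i.

Definition fixed_space (H : K -> Prop) (v : vec d) : Prop :=
  forall h, H h -> forall i, mxv (rho h) v i = v i.

(* sum of the nontrivial isotypic components of R restricted to H, i.e. the
   sum of all irreducible H-subrepresentations not isomorphic to the trivial
   one (an irreducible representation is isomorphic to the trivial one iff
   the group acts trivially on it) *)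
Definition nontriv_isotypic_sum (H : K -> Prop) (v : vec d) : Prop :=
  exists (n : nat) (w : 'I_n -> vec d),
    (forall j, exists P, irreducible_sub H P /\ nontrivial_on H P /\ P (w j)) /\
    forall i, v i = Csum predT (fun j => w j i).
End RepDefs.

Definition is_basis_on (d m : nat) (J : pred 'I_m) (b : 'I_m -> vec d)
    (P : vec d -> Prop) : Prop :=
  (forall j, J j -> P (b j)) /\
  (forall c : 'I_m -> C, (forall i, lincomb J c b i = C0) -> forall j, J j -> c j = C0) /\
  (forall v, P v -> exists c : 'I_m -> C, forall i, v i = lincomb J c b i).

Definition stabE (G : qgraph) (K : finGroupType) (aE : K -> qE G -> qE G) (e : qE G)
  : K -> Prop := fun g => aE g e = e.

(* The choices made in the recipe (plus the change-of-basis matrices, which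
   are determined by them, see valid_choice). *)
Record recipe_choice (G : qgraph) (K : finGroupType) (d : nat) := RChoice {
  nI : nat ;                            (* number of edge orbits *)
  nN : nat ;                            (* number of vertex orbits *)
  repE : 'I_nI -> qE G ;                (* representatives e~^i *)
  orbE : qE G -> 'I_nI ;                (* index of the orbit of an edge *)
  repV : 'I_nN -> qV G ;                (* representatives v~_k *)
  orbV : qV G -> 'I_nN ;                (* index of the orbit of a vertex *)
  gsel : qE G -> bool -> K ;            (* the g_l : edge at the end (e,s) = g_l e~^{nu_l} *)
  gB : 'I_d -> vec d ;                  (* global basis B *)
  dI : 'I_nI -> nat ;                   (* d_i *)
  bI : 'I_nI -> 'I_d -> vec d ;         (* bases B^i *)
  cM : qE G -> bool -> mat d            (* [rho(g_l^{-1})]^B_{B^{nu_l}} *)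
}.

Arguments nI {G K d} r.
Arguments nN {G K d} r.
Arguments repE {G K d} r _.
Arguments orbE {G K d} r _.
Arguments repV {G K d} r _.
Arguments orbV {G K d} r _.
Arguments gsel {G K d} r _ _.
Arguments gB {G K d} r _ _.
Arguments dI {G K d} r _.
Arguments bI {G K d} r _ _ _.
Arguments cM {G K d} r _ _ _ _.

Definition valid_choice (G : qgraph) (K : finGroupType)
    (aV : K -> qV G -> qV G) (aE : K -> qE G -> qE G) (d : nat) (rho : K -> mat d)
    (c : recipe_choice G K d) : Prop :=
  (forall e i, (exists g, aE g (repE c i) = e) <-> orbE c e = i) /\
  (forall v k, (exists g, aV g (repV c k) = v) <-> orbV c v = k) /\
  (forall e s, aE (gsel c e s) (repE c (orbE c e)) = e) /\
  is_basis_on predT (gB c) (fun _ => True) /\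
  (forall i, (dI c i <= d)%N /\
     is_basis_on predT (bI c i) (fun _ => True) /\
     is_basis_on (fun j : 'I_d => (j < dI c i)%N) (bI c i)
                 (fixed_space rho (stabE aE (repE c i))) /\
     is_basis_on (fun j : 'I_d => (dI c i <= j)%N) (bI c i)
                 (nontriv_isotypic_sum rho (stabE aE (repE c i)))) /\
  (* column a of cM e s is the B^{orbE e}-coordinate vector of rho(g^{-1}) b_a *)
  (forall e s a i,
     mxv (rho ((gsel c e s)^-1)%g) (gB c a) i
     = lincomb predT (fun r => cM c e s r a) (bI c (orbE c e)) i).

(* edges e^i_j of the quotient, 1 <= j <= d_i *)
Definition qedge (G : qgraph) (K : finGroupType) (d : nat) (c : recipe_choice G K d) :=
  {p : 'I_(nI c) * 'I_d | (p.2 < dI c p.1)%N}.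

(* Row (r, a) of the
   conditions at v_k, column (end s of e^mu_j):
     A_{v_k}[(r,a),(mu,j)] = sum over the ends l at v~_k with nu_l = mu of
                             A_{v~_k}[r,l] * ([rho(g_l^{-1})]^B_{B^mu})[j,a],
   which is the entry of (A_{v~_k} (x) I_d) D Theta. *)
Definition quot_graph (G : qgraph) (K : finGroupType) (d : nat)
    (c : recipe_choice G K d) : qgraph :=
  @QGraph 'I_(nN c) (qedge c)
    (fun p => orbV c (qsrc (repE c (val p).1)))
    (fun p => orbV c (qtgt (repE c (val p).1)))
    (fun p => qlen (repE c (val p).1))
    (fun p => qlen_pos (repE c (val p).1))
    (fun k => (qRow (repV c k) * 'I_d)%type)
    (fun k ra p s =>
       Csum (fun es : (qE G * bool)%type =>
               [&& endpt es.1 es.2 == repV c k, orbE c es.1 == (val p).1 & es.2 == s])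
            (fun es => Cmul (qA ra.1 es.1 es.2) (cM c es.1 es.2 (val p).2 ra.2)))
    (fun k ra p s =>
       Csum (fun es : (qE G * bool)%type =>
               [&& endpt es.1 es.2 == repV c k, orbE c es.1 == (val p).1 & es.2 == s])
            (fun es => Cmul (qB ra.1 es.1 es.2) (cM c es.1 es.2 (val p).2 ra.2))).

From Stdlib Require Import Reals Lra Psatz Classical ClassicalEpsilon.
From Stdlib Require Import FunctionalExtensionality.
From HB Require Import structures.
From mathcomp Require Import all_boot fingroup.

Set Implicit Arguments.
Unset Strict Implicit.
Unset Printing Implicit Defensive.

(* Fix valid choices c: representatives e~^i of the edge orbits, elements g_e
   with g_e e~^{orb e} = e, a global basis B and adapted bases B^i.  Data a on
   the edges e^i_j of Gamma/R and a vector w of V^R define data on Gamma,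
     (lift a w)(e) = sum_{j < d_i} [rho(g_e^-1) w]^{B^i}_j a(e^i_j),  i = orb e.
   The first d_i coordinates in B^i are unchanged by the stabilizer of e~^i,
   since B^i splits V^R into the fixed space and the (stabilizer-invariant)
   nontrivial isotypic sum; hence the lift does not depend on g_e, is
   K-equivariant, and determines a.  The recipe's vertex conditions are built
   so that a satisfies the conditions of Gamma/R iff all its lifts satisfy
   those of Gamma (quot_sat_all).  For two choices c1, c2 an explicit edge
   matrix T (tmatrix) satisfies lift_{c2} (T a) = lift_{c1} a; so T and the
   matrix in the opposite direction are mutually inverse, only mix edges of
   one orbit (hence of equal length) and preserve the vertex conditions.  A
   general criterion (transplantable_of_inverses), proved from the calculus
   of finite linear combinations, then gives the transplantation. *)

Open Scope R_scope.

(** * Complex arithmetic and finite sums *)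

Ltac Cring :=
  repeat match goal with z : C |- _ => destruct z end;
  unfold Csub, Cadd, Cmul, Copp, C0, C1, CscaleR in *; simpl in *;
  f_equal; ring.

Lemma CaddA : associative Cadd. Proof. move=> x y z; Cring. Qed.
Lemma CaddC : commutative Cadd. Proof. move=> x y; Cring. Qed.
Lemma Cadd0 : left_id C0 Cadd. Proof. move=> x; Cring. Qed.
Lemma CmulA : associative Cmul. Proof. move=> x y z; Cring. Qed.
Lemma CmulC : commutative Cmul. Proof. move=> x y; Cring. Qed.
Lemma Cmul1 : left_id C1 Cmul. Proof. move=> x; Cring. Qed.
Lemma Cmul0l : left_zero C0 Cmul. Proof. move=> x; Cring. Qed.
Lemma Cmul0r : right_zero C0 Cmul. Proof. move=> x; Cring. Qed.
Lemma CmulDl : left_distributive Cmul Cadd. Proof. move=> x y z; Cring. Qed.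
Lemma CmulDr : right_distributive Cmul Cadd. Proof. move=> x y z; Cring. Qed.

(* (C, Cadd, Cmul) is a commutative semiring, so the bigop library applies to
   [Csum]. *)
HB.instance Definition _ := Monoid.isComLaw.Build C C0 Cadd CaddA CaddC Cadd0.
HB.instance Definition _ := Monoid.isComLaw.Build C C1 Cmul CmulA CmulC Cmul1.
HB.instance Definition _ := Monoid.isMulLaw.Build C C0 Cmul Cmul0l Cmul0r.
HB.instance Definition _ := Monoid.isAddLaw.Build C Cmul Cadd CmulDl CmulDr.

Lemma CmulCA x y z : Cmul x (Cmul y z) = Cmul y (Cmul x z). Proof. Cring. Qed.
Lemma Cadd0r x : Cadd x C0 = x. Proof. Cring. Qed.
Lemma Copp_mulr x y : Cmul x (Copp y) = Copp (Cmul x y). Proof. Cring. Qed.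
Lemma Csubxx x : Csub x x = C0. Proof. Cring. Qed.
Lemma Csub_eq0 x y : Csub x y = C0 -> x = y.
Proof.
move=> H; have -> : x = Cadd (Csub x y) y by Cring.
by rewrite H Cadd0.
Qed.

Section Sums.
Variable I : finType.
Implicit Types (P : pred I) (F : I -> C).

Lemma eq_Csum P F1 F2 : (forall i, P i -> F1 i = F2 i) -> Csum P F1 = Csum P F2.
Proof. by move=> H; apply: eq_bigr. Qed.
Lemma eq_Csuml P1 P2 F : P1 =1 P2 -> Csum P1 F = Csum P2 F.
Proof. by move=> H; apply: eq_bigl. Qed.
Lemma Csum0 P F : (forall i, P i -> F i = C0) -> Csum P F = C0.
Proof. by move=> H; rewrite /Csum big1. Qed.
Lemma Csum_mkcond P F : Csum P F = Csum predT (fun i => if P i then F i else C0).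
Proof. by rewrite /Csum big_mkcond. Qed.
Lemma CsumID (J : pred I) F : Csum predT F = Cadd (Csum J F) (Csum (predC J) F).
Proof. by rewrite /Csum (bigID J). Qed.
Lemma Csum_add P F1 F2 :
  Csum P (fun i => Cadd (F1 i) (F2 i)) = Cadd (Csum P F1) (Csum P F2).
Proof. by rewrite /Csum big_split. Qed.
Lemma Csum_distrr P F a : Cmul a (Csum P F) = Csum P (fun i => Cmul a (F i)).
Proof. by rewrite /Csum big_distrr. Qed.
Lemma Csum_distrl P F a : Cmul (Csum P F) a = Csum P (fun i => Cmul (F i) a).
Proof. by rewrite /Csum big_distrl. Qed.
Lemma Csum_opp P F : Copp (Csum P F) = Csum P (fun i => Copp (F i)).
Proof.
have Eopp z : Copp z = Cmul (mkC (- 1) 0) z by Cring.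
by rewrite Eopp Csum_distrr; apply: eq_Csum => i _; rewrite Eopp.
Qed.
Lemma Csum_sub P F1 F2 :
  Csum P (fun i => Csub (F1 i) (F2 i)) = Csub (Csum P F1) (Csum P F2).
Proof. by rewrite /Csub Csum_opp -Csum_add. Qed.
End Sums.

Lemma Csum_pair_snd (I J : finType) (P : pred I) (F : I -> J -> C) j0 :
  Csum (fun x : I * J => P x.1 && (j0 == x.2)) (fun x => F x.1 x.2)
  = Csum P (fun i => F i j0).
Proof.
rewrite /Csum -(pair_big_dep P (fun _ j => j0 == j) F).
apply: eq_bigr => i _; rewrite (eq_bigl (fun j => j == j0)) => [|j]; last exact: eq_sym.
by rewrite big_pred1_eq.
Qed.

Lemma Csum_exchange (I J : finType) (P : pred I) (Q : pred J) (F : I -> J -> C) :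
  Csum P (fun i => Csum Q (F i)) = Csum Q (fun j => Csum P (fun i => F i j)).
Proof. by rewrite /Csum exchange_big. Qed.

(** * Derivatives of finite linear combinations *)

(* Bounds on the modulus in terms of real and imaginary parts; they make the
   epsilon-delta estimates below linear. *)
Lemma abs_Re_le z : Rabs (Re z) <= Cmod z.
Proof.
rewrite /Cmod -sqrt_Rsqr_abs; apply: sqrt_le_1_alt.
have := Rle_0_sqr (Im z); rewrite /Rsqr; lra.
Qed.

Lemma abs_Im_le z : Rabs (Im z) <= Cmod z.
Proof.
rewrite /Cmod -sqrt_Rsqr_abs; apply: sqrt_le_1_alt.
have := Rle_0_sqr (Re z); rewrite /Rsqr; lra.
Qed.

Lemma Cmod_le_abs z : Cmod z <= Rabs (Re z) + Rabs (Im z).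
Proof.
have h1 := Rabs_pos (Re z); have h2 := Rabs_pos (Im z).
rewrite /Cmod -(sqrt_Rsqr (Rabs (Re z) + Rabs (Im z))); last lra.
apply: sqrt_le_1_alt; rewrite /Rsqr.
have e1 : Re z * Re z = Rabs (Re z) * Rabs (Re z) by rewrite -Rabs_mult Rabs_right; nra.
have e2 : Im z * Im z = Rabs (Im z) * Rabs (Im z) by rewrite -Rabs_mult Rabs_right; nra.
nra.
Qed.

Lemma Cmod_add z w : Cmod (Cadd z w) <= 2 * (Cmod z + Cmod w).
Proof.
apply: Rle_trans (Cmod_le_abs _) _; rewrite /Cadd /=.
have := Rabs_triang (Re z) (Re w); have := Rabs_triang (Im z) (Im w).
have := abs_Re_le z; have := abs_Re_le w; have := abs_Im_le z; have := abs_Im_le w.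
lra.
Qed.

Lemma Cmod_mul c z : Cmod (Cmul c z) <= 2 * (Rabs (Re c) + Rabs (Im c)) * Cmod z.
Proof.
apply: Rle_trans (Cmod_le_abs _) _; rewrite /Cmul /=.
have h1 := Rabs_triang (Re c * Re z) (- (Im c * Im z)).
have h2 := Rabs_triang (Re c * Im z) (Im c * Re z).
rewrite Rabs_Ropp !Rabs_mult in h1; rewrite !Rabs_mult in h2.
have a1 := abs_Re_le z; have a2 := abs_Im_le z.
have b1 := Rabs_pos (Re c); have b2 := Rabs_pos (Im c).
have q1 := Rabs_pos (Re z); have q2 := Rabs_pos (Im z).
rewrite /Rminus; nra.
Qed.

Section Derivatives.
Variables (a b x : R).

Lemma deriv_const0 : has_deriv_within a b (fun _ => C0) x C0.
Proof.
move=> eps Heps; exists 1; split=> [|h _ _ _ _]; first lra.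
have -> : Csub (CscaleR (/ h) (Csub C0 C0)) C0 = mkC 0 0 by Cring.
by rewrite /Cmod /= /Rsqr Rmult_0_l Rplus_0_l sqrt_0.
Qed.

Lemma deriv_add f g df dg :
  has_deriv_within a b f x df -> has_deriv_within a b g x dg ->
  has_deriv_within a b (fun y => Cadd (f y) (g y)) x (Cadd df dg).
Proof.
move=> Hf Hg eps Heps.
have [d1 [Hd1 H1]] := Hf (eps / 4) ltac:(lra).
have [d2 [Hd2 H2]] := Hg (eps / 4) ltac:(lra).
exists (Rmin d1 d2); split=> [|h hn hd ha hb]; first exact: Rmin_pos.
set qf := Csub (CscaleR (/ h) (Csub (f (x + h)) (f x))) df.
set qg := Csub (CscaleR (/ h) (Csub (g (x + h)) (g x))) dg.
have -> : Csub (CscaleR (/ h) (Csub (Cadd (f (x + h)) (g (x + h))) (Cadd (f x) (g x))))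
            (Cadd df dg) = Cadd qf qg by rewrite /qf /qg; Cring.
apply: Rle_lt_trans (Cmod_add _ _) _.
have := H1 h hn (Rlt_le_trans _ _ _ hd (Rmin_l _ _)) ha hb.
have := H2 h hn (Rlt_le_trans _ _ _ hd (Rmin_r _ _)) ha hb.
rewrite -/qf -/qg; lra.
Qed.

Lemma deriv_scale f df c :
  has_deriv_within a b f x df ->
  has_deriv_within a b (fun y => Cmul c (f y)) x (Cmul c df).
Proof.
move=> Hf eps Heps.
set M := 2 * (Rabs (Re c) + Rabs (Im c)) + 1.
have HM : 0 < M by rewrite /M; have := Rabs_pos (Re c); have := Rabs_pos (Im c); lra.
have [d1 [Hd1 H1]] := Hf (eps / M) ltac:(apply: Rdiv_lt_0_compat; lra).
exists d1; split=> // h hn hd ha hb.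
set q := Csub (CscaleR (/ h) (Csub (f (x + h)) (f x))) df.
have -> : Csub (CscaleR (/ h) (Csub (Cmul c (f (x + h))) (Cmul c (f x)))) (Cmul c df)
          = Cmul c q by rewrite /q; Cring.
apply: Rle_lt_trans (Cmod_mul _ _) _.
have Hq : Cmod q < eps / M by exact: H1.
have q0 : 0 <= Cmod q by exact: sqrt_pos.
have : M * Cmod q < eps.
  have := Rmult_lt_compat_l M _ _ HM Hq.
  by rewrite /Rdiv (Rmult_comm eps) -Rmult_assoc Rinv_r ?Rmult_1_l; lra.
rewrite /M; have := Rabs_pos (Re c); have := Rabs_pos (Im c); nra.
Qed.

Lemma deriv_lincomb (I : finType) (c : I -> C) (F : I -> R -> C) (dF : I -> C) :
  (forall i, c i = C0 \/ has_deriv_within a b (F i) x (dF i)) ->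
  has_deriv_within a b (fun y => Csum predT (fun i => Cmul (c i) (F i y))) x
                       (Csum predT (fun i => Cmul (c i) (dF i))).
Proof.
move=> H; rewrite /Csum; elim: (index_enum I) => [|i r IH].
  have -> : (fun y => \big[Cadd/C0]_(i <- [::]) Cmul (c i) (F i y)) = fun _ => C0.
    by apply: functional_extensionality => y; rewrite big_nil.
  by rewrite big_nil; exact: deriv_const0.
have -> : (fun y => \big[Cadd/C0]_(j <- i :: r) Cmul (c j) (F j y))
          = fun y => Cadd (Cmul (c i) (F i y)) (\big[Cadd/C0]_(j <- r) Cmul (c j) (F j y)).
  by apply: functional_extensionality => y; rewrite big_cons.
rewrite big_cons; apply: deriv_add => //.
case: (H i) => [ci0 | Hi]; last exact: deriv_scale.
have -> : (fun y => Cmul (c i) (F i y)) = fun _ => C0.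
  by apply: functional_extensionality => y; rewrite ci0 Cmul0l.
by rewrite ci0 Cmul0l; exact: deriv_const0.
Qed.

End Derivatives.

(** * A criterion for transplantability *)

(* Mixing edge data by a matrix, for any kind of data indexed by the edges:
   functions on the edges (X = R), boundary values (X = bool), ...  The map
   [transplant] of the definition of transplantability is the case X = R. *)
Definition transfer (E1 E2 : finType) (X : Type) (T : E2 -> E1 -> C)
    (a : E1 -> X -> C) : E2 -> X -> C :=
  fun e2 t => Csum predT (fun e1 => Cmul (T e2 e1) (a e1 t)).

Definition preserves_conditions (G1 G2 : qgraph) (T : qE G2 -> qE G1 -> C) :=
  forall a b : qE G1 -> bool -> C, (forall v, sat_at v a b) ->
    forall v, sat_at v (transfer T a) (transfer T b).

Section LengthRespecting.
Variables (G1 G2 : qgraph) (T : qE G2 -> qE G1 -> C).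
Hypothesis T_len : forall e2 e1, qlen e2 <> qlen e1 -> T e2 e1 = C0.

Lemma T_support e2 e1 : T e2 e1 = C0 \/ qlen e2 = qlen e1.
Proof. by case: (Req_dec (qlen e2) (qlen e1)) => H; [right | left; apply: T_len]. Qed.

(* The boundary values of a transplanted function are the transferred
   boundary values, because T only mixes edges of equal length. *)
Lemma bval_transplant (F : gfun G1) :
  bval (transplant T F) = transfer T (bval F).
Proof.
apply: functional_extensionality => e2; apply: functional_extensionality => s.
case: s => //; apply: eq_Csum => e1 _.
by case: (T_support e2 e1) => [-> | ->]; rewrite ?Cmul0l.
Qed.

Lemma dval_transplant (F' : gfun G1) :
  dval (transplant T F') = transfer T (dval F').
Proof.
apply: functional_extensionality => e2; apply: functional_extensionality => s.
case: s => //=; rewrite /transfer Csum_opp; apply: eq_Csum => e1 _ /=.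
by case: (T_support e2 e1) => [-> | ->]; rewrite ?Cmul0l ?Copp_mulr //; Cring.
Qed.

Lemma deriv_transplant (F F' : gfun G1) e2 x :
  in_edge e2 x ->
  (forall e1, in_edge e1 x -> has_deriv_within R0 (qlen e1) (F e1) x (F' e1 x)) ->
  has_deriv_within R0 (qlen e2) (transplant T F e2) x (transplant T F' e2 x).
Proof.
move=> Hx HF; apply: deriv_lincomb => e1.
case: (T_support e2 e1) => [-> | Hl]; [by left | right].
by rewrite Hl; apply: HF; rewrite /in_edge -Hl.
Qed.

Lemma Phi_transplant lam (F : gfun G1) :
  preserves_conditions T -> Phi G1 lam F -> Phi G2 lam (transplant T F).
Proof.
move=> HT [F' [F'' [Hedge Hsat]]].
exists (transplant T F'), (transplant T F''); split=> [e2 x Hx|v].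
- split; [|split].
  + by apply: deriv_transplant => // e1 /Hedge [].
  + by apply: deriv_transplant => // e1 /Hedge [_ []].
  + rewrite /transplant Csum_distrr Csum_opp; apply: eq_Csum => e1 _.
    case: (T_support e2 e1) => [-> | Hl]; first by rewrite Cmul0l; Cring.
    have Hx1 : in_edge e1 x by rewrite /in_edge -Hl.
    by have [_ [_ ->]] := Hedge e1 x Hx1; rewrite Copp_mulr CmulCA.
- by rewrite bval_transplant dval_transplant; apply: HT.
Qed.

End LengthRespecting.

Lemma transplantable_of_inverses (G1 G2 : qgraph)
    (T : qE G2 -> qE G1 -> C) (S : qE G1 -> qE G2 -> C) :
  (forall e2 e1, qlen e2 <> qlen e1 -> T e2 e1 = C0) ->
  (forall e1 e2, qlen e1 <> qlen e2 -> S e1 e2 = C0) ->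
  preserves_conditions T -> preserves_conditions S ->
  (forall (F : gfun G1) e x, transplant S (transplant T F) e x = F e x) ->
  (forall (P : gfun G2) e x, transplant T (transplant S P) e x = P e x) ->
  transplantable G1 G2.
Proof.
move=> T_len S_len HT HS ST TS; exists T; split=> // lam; split; [|split].
- by move=> F; apply: Phi_transplant.
- move=> F1 F2 _ _ Heq e1 x Hx; rewrite -(ST F1) -(ST F2).
  apply: eq_Csum => e2 _.
  case: (T_support S_len e1 e2) => [-> | Hl]; first by rewrite !Cmul0l.
  by rewrite Heq // /in_edge -Hl.
- move=> P HP; exists (transplant S P); split; first exact: Phi_transplant.
  by move=> e x _; apply: TS.
Qed.

(** * Linear algebra in C^d *)

Section Vectors.
Variable d : nat.
Implicit Types (u v w : vec d) (M : mat d).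

Lemma vext u v : (forall i, u i = v i) -> u = v.
Proof. exact: functional_extensionality. Qed.

Lemma vec_nonzero v : v <> @vzero d -> exists i, v i <> C0.
Proof.
move=> Hv; apply: NNPP => Hall; apply: Hv; apply: vext => i.
by apply: NNPP => Hi; apply: Hall; exists i.
Qed.

Lemma mxv_lincomb M m (J : pred 'I_m) x b :
  mxv M (lincomb J x b) = lincomb J x (fun j => mxv M (b j)).
Proof.
apply: vext => i; rewrite /mxv /lincomb.
under eq_Csum => k _ do rewrite Csum_distrr.
rewrite Csum_exchange; apply: eq_Csum => j _.
by rewrite Csum_distrr; apply: eq_Csum => k _; rewrite CmulCA.
Qed.

Lemma mxv_sum M m (w : 'I_m -> vec d) :
  mxv M (fun i => Csum predT (fun j => w j i))
  = fun i => Csum predT (fun j => mxv M (w j) i).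
Proof.
apply: vext => i; rewrite /mxv.
by under eq_Csum => k _ do rewrite Csum_distrr; rewrite Csum_exchange.
Qed.

Lemma mxv_add M u v : mxv M (vadd u v) = vadd (mxv M u) (mxv M v).
Proof.
by apply: vext => i; rewrite /mxv /vadd -Csum_add; apply: eq_Csum => k _; apply: CmulDr.
Qed.

Lemma mxv_scale M c v : mxv M (vscale c v) = vscale c (mxv M v).
Proof.
by apply: vext => i; rewrite /mxv /vscale Csum_distrr; apply: eq_Csum => k _; apply: CmulCA.
Qed.

Lemma mxv_zero M : mxv M (@vzero d) = @vzero d.
Proof. by apply: vext => i; apply: Csum0 => k _; apply: Cmul0r. Qed.

Lemma subspace_lincomb m (P : vec d -> Prop) (J : pred 'I_m) x b :
  is_subspace P -> (forall j, J j -> P (b j)) -> P (lincomb J x b).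
Proof.
move=> [P0 [PD PS]] Hb; rewrite /lincomb /Csum.
elim: (index_enum _) => [|a r IH].
  by have -> : (fun i => \big[Cadd/C0]_(j <- [::] | J j) Cmul (x j) (b j i)) = @vzero d
    by apply: vext => i; rewrite big_nil.
case Ja: (J a).
  have -> : (fun i => \big[Cadd/C0]_(j <- a :: r | J j) Cmul (x j) (b j i))
      = vadd (vscale (x a) (b a)) (fun i => \big[Cadd/C0]_(j <- r | J j) Cmul (x j) (b j i)).
    by apply: vext => i; rewrite big_cons Ja.
  by apply: PD => //; apply: PS; apply: Hb.
by have -> : (fun i => \big[Cadd/C0]_(j <- a :: r | J j) Cmul (x j) (b j i))
    = (fun i => \big[Cadd/C0]_(j <- r | J j) Cmul (x j) (b j i))
  by apply: vext => i; rewrite big_cons Ja.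
Qed.

Definition coordOf (b : 'I_d -> vec d) (w : vec d) : 'I_d -> C :=
  epsilon (inhabits (fun _ => C0)) (fun x => w = lincomb predT x b).

Section Coordinates.
Variable b : 'I_d -> vec d.
Hypothesis b_basis : is_basis_on predT b (fun _ => True).

Lemma coordP w : w = lincomb predT (coordOf b w) b.
Proof.
rewrite /coordOf; apply: (epsilon_spec (inhabits (fun _ : 'I_d => C0))
                                        (fun x => w = lincomb predT x b)).
have [x Hx] := (proj2 (proj2 b_basis)) w I.
by exists x; apply: vext.
Qed.

Lemma coord_uniq w x : w = lincomb predT x b -> coordOf b w = x.
Proof.
move=> Hw; apply: functional_extensionality => j; apply: Csub_eq0.
apply: (proj1 (proj2 b_basis) (fun k => Csub (coordOf b w k) (x k))) => // i.
have E k : Cmul (Csub (coordOf b w k) (x k)) (b k i)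
           = Csub (Cmul (coordOf b w k) (b k i)) (Cmul (x k) (b k i)) by Cring.
rewrite /lincomb; under eq_Csum => k _ do rewrite E.
transitivity (Csub (lincomb predT (coordOf b w) b i) (lincomb predT x b i)).
  exact: Csum_sub.
by rewrite -coordP -Hw Csubxx.
Qed.

Lemma coord_lincomb m (J : pred 'I_m) x (vs : 'I_m -> vec d) :
  coordOf b (lincomb J x vs)
  = fun j => Csum J (fun a => Cmul (x a) (coordOf b (vs a) j)).
Proof.
apply: coord_uniq; apply: vext => i; rewrite /lincomb.
transitivity (Csum J (fun a => Cmul (x a) (lincomb predT (coordOf b (vs a)) b i))).
  by apply: eq_Csum => a _; rewrite -coordP.
rewrite /lincomb; under eq_Csum => a _ do rewrite Csum_distrr.
rewrite Csum_exchange; apply: eq_Csum => j _.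
by rewrite Csum_distrl; apply: eq_Csum => a _; rewrite CmulA.
Qed.

Lemma coord_add u v :
  coordOf b (vadd u v) = fun j => Cadd (coordOf b u j) (coordOf b v j).
Proof.
apply: coord_uniq; apply: vext => i.
rewrite /vadd {1}(coordP u) {1}(coordP v) /lincomb -Csum_add.
by apply: eq_Csum => j _; rewrite CmulDl.
Qed.

Lemma coord_out (J : pred 'I_d) y j :
  ~~ J j -> coordOf b (lincomb J y b) j = C0.
Proof.
move=> Jj; have -> : coordOf b (lincomb J y b) = fun k => if J k then y k else C0.
  by apply: coord_uniq; apply: vext => i; rewrite /lincomb Csum_mkcond;
     apply: eq_Csum => k _; case: (J k); rewrite ?Cmul0l.
by rewrite (negbTE Jj).
Qed.

Lemma coord_basis_vec j : coordOf b (b j) = fun k => if k == j then C1 else C0.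
Proof.
apply: coord_uniq; apply: vext => i.
rewrite /lincomb /Csum (bigD1 j) //= eqxx Cmul1 big1 ?Cadd0r //.
by move=> k /negPf ->; rewrite Cmul0l.
Qed.

End Coordinates.
End Vectors.

(** * Representations: fixed spaces and nontrivial isotypic sums *)

Section Representation.
Variables (K : finGroupType) (d : nat) (rho : K -> mat d).
Hypothesis rho_rep : is_rep rho.
Implicit Types (g h k : K) (u v : vec d) (H : K -> Prop) (P Q : vec d -> Prop).

Lemma rho_mul g h v : mxv (rho (g * h)%g) v = mxv (rho g) (mxv (rho h) v).
Proof.
apply: vext => i; rewrite /mxv.
under eq_Csum => k _ do rewrite (proj2 rho_rep) Csum_distrl.
rewrite Csum_exchange; apply: eq_Csum => j _.
by rewrite Csum_distrr; apply: eq_Csum => k _; rewrite CmulA.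
Qed.

Lemma rho_1 v : mxv (rho 1%g) v = v.
Proof.
apply: vext => i; rewrite /mxv /Csum (bigD1 i) //= (proj1 rho_rep) eqxx Cmul1.
rewrite big1 ?Cadd0r // => j /negPf ji.
by rewrite (proj1 rho_rep) eq_sym ji Cmul0l.
Qed.

Lemma rho_invK g v : mxv (rho (g^-1)%g) (mxv (rho g) v) = v.
Proof. by rewrite -rho_mul mulVg rho_1. Qed.

Lemma rho_Kinv g v : mxv (rho g) (mxv (rho (g^-1)%g) v) = v.
Proof. by rewrite -rho_mul mulgV rho_1. Qed.

(* The image rho(g) P of a set of vectors P. *)
Definition image_by g P : vec d -> Prop := fun u => P (mxv (rho (g^-1)%g) u).

Lemma image_byK g P u : image_by (g^-1)%g (image_by g P) u = P u.
Proof. by rewrite /image_by invgK rho_invK. Qed.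

Lemma image_by_subspace g P : is_subspace P -> is_subspace (image_by g P).
Proof.
move=> [P0 [PD PS]]; split; [|split].
- by rewrite /image_by mxv_zero.
- by move=> u1 u2 H1 H2; rewrite /image_by mxv_add; apply: PD.
- by move=> c u H1; rewrite /image_by mxv_scale; apply: PS.
Qed.

Lemma image_by_invariant g H H' P :
  (forall k, H' k -> H (g^-1 * k * g)%g) ->
  invariant rho H P -> invariant rho H' (image_by g P).
Proof.
move=> HH Pinv k u Hk Pu; rewrite /image_by.
have -> : mxv (rho (g^-1)%g) (mxv (rho k) u)
          = mxv (rho (g^-1 * k * g)%g) (mxv (rho (g^-1)%g) u).
  by rewrite !rho_mul rho_Kinv.
by apply: Pinv => //; apply: HH.
Qed.

Lemma irreducible_image g H H' P :
  (forall k, H' k -> H (g^-1 * k * g)%g) -> (forall k, H k -> H' (g * k * g^-1)%g) ->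
  irreducible_sub rho H P -> irreducible_sub rho H' (image_by g P).
Proof.
move=> HH' HH [Psub [Pinv [[v [Pv [i vi]]] Pmin]]].
split; first exact: image_by_subspace Psub.
split; first exact: image_by_invariant HH' Pinv.
split.
  exists (mxv (rho g) v); split; first by rewrite /image_by rho_invK.
  apply: vec_nonzero => v0; apply: vi.
  by rewrite -(rho_invK g v) v0 mxv_zero.
move=> Q Qsub Qinv QP.
have Q'inv : invariant rho H (image_by (g^-1)%g Q).
  by apply: image_by_invariant Qinv => k /HH; rewrite invgK.
have Q'P u : image_by (g^-1)%g Q u -> P u.
  by move/QP; rewrite -(image_byK g P u).
case: (Pmin _ (image_by_subspace (g^-1)%g Qsub) Q'inv Q'P) => [Q0 | PQ].
- left=> u Qu j; have := Q0 (mxv (rho (g^-1)%g) u).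
  rewrite /image_by invgK rho_Kinv => /(_ Qu) u0.
  by rewrite -(rho_Kinv g u) (vext u0) mxv_zero.
- by right=> u /PQ; rewrite /image_by invgK rho_Kinv.
Qed.

Lemma nontrivial_image g H H' P :
  (forall k, H k -> H' (g * k * g^-1)%g) ->
  nontrivial_on rho H P -> nontrivial_on rho H' (image_by g P).
Proof.
move=> HH [h [v [Hh [Pv [i Hi]]]]].
exists (g * h * g^-1)%g, (mxv (rho g) v); split; first exact: HH.
split; first by rewrite /image_by rho_invK.
apply: NNPP => Hn; apply: Hi.
have E : mxv (rho (g * h * g^-1)%g) (mxv (rho g) v) = mxv (rho g) v.
  by apply: vext => j; apply: NNPP => Hj; apply: Hn; exists j.
move: E; rewrite !rho_mul rho_invK => /(congr1 (mxv (rho (g^-1)%g))).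
by rewrite !rho_invK => ->.
Qed.

Lemma fixed_subspace H : is_subspace (fixed_space rho H).
Proof.
split; [|split].
- by move=> h _ i; rewrite mxv_zero.
- by move=> u v Hu Hv h Hh i; rewrite mxv_add /vadd Hu // Hv.
- by move=> c v Hv h Hh i; rewrite mxv_scale /vscale Hv.
Qed.

Lemma nontriv_subspace H : is_subspace (nontriv_isotypic_sum rho H).
Proof.
split; [|split].
- exists 0%N, (fun _ => @vzero d); split; first by case.
  by move=> i; rewrite /vzero Csum0 //; case.
- move=> u v [n1 [w1 [H1 E1]]] [n2 [w2 [H2 E2]]].
  exists (n1 + n2)%N, (fun j => match split j with inl a => w1 a | inr b => w2 b end).
  split=> [j | i]; first by case: (split j) => a; [apply: H1 | apply: H2].
  rewrite /vadd E1 E2 /Csum big_split_ord.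
  by congr Cadd; apply: eq_bigr => j _; [rewrite (unsplitK (inl j)) | rewrite (unsplitK (inr j))].
- move=> c v [n [w [Hw E]]]; exists n, (fun j => vscale c (w j)).
  split=> [j | i]; last by rewrite /vscale E Csum_distrr.
  have [P [Pirr [Pnt Pw]]] := Hw j; exists P; split; [|split] => //.
  by have [[_ [_ PS]] _] := Pirr; apply: PS.
Qed.

End Representation.

(** * Group actions on a quantum graph *)

Section Action.
Variables (G : qgraph) (K : finGroupType).
Variables (aV : K -> qV G -> qV G) (aE : K -> qE G -> qE G).
Hypothesis act : is_qaction aV aE.

Lemma aE1 e : aE 1%g e = e.
Proof. by case: act => [_ [_ [H _]]]; apply: H. Qed.
Lemma aEM g h e : aE (g * h)%g e = aE g (aE h e).
Proof. by case: act => [_ [_ [_ [H _]]]]; apply: H. Qed.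
Lemma aV1 v : aV 1%g v = v.
Proof. by case: act => [H _]; apply: H. Qed.
Lemma aVM g h v : aV (g * h)%g v = aV g (aV h v).
Proof. by case: act => [_ [H _]]; apply: H. Qed.
Lemma aE_len g e : qlen (aE g e) = qlen e.
Proof. by case: act => [_ [_ [_ [_ [_ [_ [H _]]]]]]]; apply: H. Qed.
Lemma aE_endpt g e s : endpt (aE g e) s = aV g (endpt e s).
Proof. by case: act => [_ [_ [_ [_ [Hs [Ht _]]]]]]; case: s; rewrite /endpt ?Hs ?Ht. Qed.
Lemma sat_act g v (a b : qE G -> bool -> C) :
  sat_at v a b ->
  sat_at (aV g v) (fun e s => a (aE (g^-1)%g e) s) (fun e s => b (aE (g^-1)%g e) s).
Proof. by case: act => [_ [_ [_ [_ [_ [_ [_ H]]]]]]]; move/(H g v a b). Qed.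

Lemma aE_invK g e : aE (g^-1)%g (aE g e) = e. Proof. by rewrite -aEM mulVg aE1. Qed.
Lemma aE_Kinv g e : aE g (aE (g^-1)%g e) = e. Proof. by rewrite -aEM mulgV aE1. Qed.

Lemma stab_conj g e k : stabE aE (aE g e) k -> stabE aE e (g^-1 * k * g)%g.
Proof. by rewrite /stabE !aEM => ->; rewrite aE_invK. Qed.
Lemma stab_conjV g e k : stabE aE e k -> stabE aE (aE g e) (g * k * g^-1)%g.
Proof. by rewrite /stabE !aEM aE_invK => ->. Qed.

Variables (d : nat) (rho : K -> mat d).
Hypothesis rho_rep : is_rep rho.

Definition fixsp (e : qE G) := fixed_space rho (stabE aE e).
Definition ntsp (e : qE G) := nontriv_isotypic_sum rho (stabE aE e).

Lemma ntsp_transport e g v : ntsp e v -> ntsp (aE g e) (mxv (rho g) v).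
Proof.
move=> [n [w [Hw Ev]]]; exists n, (fun j => mxv (rho g) (w j)); split.
- move=> j; have [P [Pirr [Pnt Pw]]] := Hw j.
  exists (image_by rho g P); split; [|split].
  + apply: (irreducible_image rho_rep) Pirr => k; first exact: stab_conj.
    exact: stab_conjV.
  + by apply: (nontrivial_image rho_rep) Pnt => // k; apply: stab_conjV.
  + by rewrite /image_by (rho_invK rho_rep).
- have -> : v = fun i => Csum predT (fun j => w j i) by apply: vext.
  by rewrite mxv_sum.
Qed.

Section AdaptedBasis.
Variables (e : qE G) (n : nat) (b : 'I_d -> vec d).
Hypothesis b_basis : is_basis_on predT b (fun _ => True).
Hypothesis b_fix : is_basis_on (fun j : 'I_d => (j < n)%N) b (fixsp e).
Hypothesis b_nt : is_basis_on (fun j : 'I_d => (n <= j)%N) b (ntsp e).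

Definition fixpart u := lincomb (fun j : 'I_d => (j < n)%N) (coordOf b u) b.
Definition ntpart u := lincomb (fun j : 'I_d => (n <= j)%N) (coordOf b u) b.

Lemma fixpart_fixed u : fixsp e (fixpart u).
Proof. by apply: subspace_lincomb; [apply: fixed_subspace | case: b_fix]. Qed.

Lemma ntpart_nt u : ntsp e (ntpart u).
Proof. by apply: subspace_lincomb; [apply: nontriv_subspace | case: b_nt]. Qed.

Lemma fix_nt_decomp u : u = vadd (fixpart u) (ntpart u).
Proof.
rewrite {1}(coordP b_basis u); apply: vext => i.
rewrite /vadd /lincomb (CsumID (fun j : 'I_d => (j < n)%N)); congr Cadd.
by apply: eq_Csuml => j /=; rewrite -leqNgt.
Qed.

Lemma coord_ntsp u (j : 'I_d) : ntsp e u -> (j < n)%N -> coordOf b u j = C0.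
Proof.
move=> Hu jn; have [y Hy] := (proj2 (proj2 b_nt)) u Hu.
by rewrite (vext Hy) coord_out // -ltnNge.
Qed.

Lemma coord_fixed_add u v (j : 'I_d) :
  ntsp e v -> (j < n)%N -> coordOf b (vadd u v) j = coordOf b u j.
Proof. by move=> Hv jn; rewrite (coord_add b_basis) /= (coord_ntsp Hv jn) Cadd0r. Qed.

Lemma coord_stab (j : 'I_d) k v :
  (j < n)%N -> stabE aE e k -> coordOf b (mxv (rho k) v) j = coordOf b v j.
Proof.
move=> jn Hk; rewrite {1}(fix_nt_decomp v) mxv_add.
have -> : mxv (rho k) (fixpart v) = fixpart v by apply: vext; apply: fixpart_fixed.
rewrite coord_fixed_add //; last by rewrite -Hk; apply: ntsp_transport; apply: ntpart_nt.
by rewrite {2}(fix_nt_decomp v) coord_fixed_add //; apply: ntpart_nt.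
Qed.

Lemma coord_welldef (j : 'I_d) g1 g2 w :
  (j < n)%N -> aE g1 e = aE g2 e ->
  coordOf b (mxv (rho (g1^-1)%g) w) j = coordOf b (mxv (rho (g2^-1)%g) w) j.
Proof.
move=> jn Hg.
have -> : mxv (rho (g1^-1)%g) w = mxv (rho (g1^-1 * g2)%g) (mxv (rho (g2^-1)%g) w).
  by rewrite (rho_mul rho_rep) (rho_Kinv rho_rep).
by apply: coord_stab => //; rewrite /stabE aEM -Hg aE_invK.
Qed.

End AdaptedBasis.
End Action.

(** * The quotient for one choice, and its lift to Gamma *)

Section Quotient.
Variables (G : qgraph) (K : finGroupType).
Variables (aV : K -> qV G -> qV G) (aE : K -> qE G -> qE G).
Variables (d : nat) (rho : K -> mat d).
Hypothesis act : is_qaction aV aE.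
Hypothesis rho_rep : is_rep rho.
Variable c : recipe_choice G K d.
Hypothesis c_valid : valid_choice aV aE rho c.

Lemma orbE_spec e i : (exists g, aE g (repE c i) = e) <-> orbE c e = i.
Proof. by case: c_valid => [H _]; apply: H. Qed.
Lemma orbV_spec v k : (exists g, aV g (repV c k) = v) <-> orbV c v = k.
Proof. by case: c_valid => [_ [H _]]; apply: H. Qed.
Lemma gselP e s : aE (gsel c e s) (repE c (orbE c e)) = e.
Proof. by case: c_valid => [_ [_ [H _]]]; apply: H. Qed.
Lemma gB_basis : is_basis_on predT (gB c) (fun _ => True).
Proof. by case: c_valid => [_ [_ [_ [H _]]]]. Qed.
Lemma bI_basis i : is_basis_on predT (bI c i) (fun _ => True).
Proof. by case: c_valid => [_ [_ [_ [_ [H _]]]]]; case: (H i) => [_ []]. Qed.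
Lemma bI_fix i :
  is_basis_on (fun j : 'I_d => (j < dI c i)%N) (bI c i) (fixsp aE rho (repE c i)).
Proof. by case: c_valid => [_ [_ [_ [_ [H _]]]]]; case: (H i) => [_ [_ []]]. Qed.
Lemma bI_nt i :
  is_basis_on (fun j : 'I_d => (dI c i <= j)%N) (bI c i) (ntsp aE rho (repE c i)).
Proof. by case: c_valid => [_ [_ [_ [_ [H _]]]]]; case: (H i) => [_ [_ [_ ]]]. Qed.

Definition coordc i := coordOf (bI c i).

Lemma cM_coord e s a r :
  cM c e s r a = coordc (orbE c e) (mxv (rho ((gsel c e s)^-1)%g) (gB c a)) r.
Proof.
case: c_valid => [_ [_ [_ [_ [_ H]]]]].
by rewrite /coordc (@coord_uniq _ _ (bI_basis _) _ (fun r => cM c e s r a)) //; apply: vext.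
Qed.

Lemma orbE_rep i : orbE c (repE c i) = i.
Proof. by apply/orbE_spec; exists 1%g; exact: (aE1 act). Qed.
Lemma orbE_act g e : orbE c (aE g e) = orbE c e.
Proof. by apply/orbE_spec; exists (g * gsel c e false)%g; rewrite (aEM act) gselP. Qed.
Lemma orbV_rep k : orbV c (repV c k) = k.
Proof. by apply/orbV_spec; exists 1%g; exact: (aV1 act). Qed.
Lemma orbV_act g v : orbV c (aV g v) = orbV c v.
Proof.
have [h Hh] := proj2 (orbV_spec v (orbV c v)) erefl.
by apply/orbV_spec; exists (g * h)%g; rewrite (aVM act) Hh.
Qed.

Lemma same_orbit e1 e2 : orbE c e1 = orbE c e2 <-> exists g, aE g e2 = e1.
Proof.
split=> [E | [g <-]]; last exact: orbE_act.
exists (gsel c e1 false * (gsel c e2 false)^-1)%g.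
have := aE_invK act (gsel c e2 false) (repE c (orbE c e2)).
by rewrite gselP (aEM act) => ->; rewrite -E gselP.
Qed.

Lemma sum_qedge i (F : 'I_d -> C) :
  Csum (fun p : qedge c => (val p).1 == i) (fun p => F (val p).2)
  = Csum (fun j : 'I_d => (j < dI c i)%N) F.
Proof.
symmetry; rewrite /Csum (reindex_omap (fun p : qedge c => (val p).2)
                          (fun j => insub (i, j) : option (qedge c))) => [|j ji]; last first.
  by rewrite insubT.
apply: eq_bigl => p /=; case: insubP => [q Hq Eq | Hq].
  apply/idP/idP => [/andP [_ /eqP [<-]] | /eqP Hp]; first by rewrite Eq.
  apply/andP; split; first by rewrite -Hp; exact: (valP p).
  by apply/eqP; congr Some; apply: val_inj; rewrite Eq /= -Hp -surjective_pairing.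
apply/idP/idP => [/andP [] // | /eqP Hp].
by case/negP: Hq; rewrite /= -Hp; exact: (valP p).
Qed.

Lemma coordc_welldef (p : qedge c) g1 g2 w :
  aE g1 (repE c (val p).1) = aE g2 (repE c (val p).1) ->
  coordc (val p).1 (mxv (rho (g1^-1)%g) w) (val p).2
  = coordc (val p).1 (mxv (rho (g2^-1)%g) w) (val p).2.
Proof. by apply: (coord_welldef act rho_rep (bI_basis _) (bI_fix _) (bI_nt _) _ (valP p)). Qed.

Definition lift (X : Type) (a : qedge c -> X -> C) (w : vec d) (e : qE G) (t : X) : C :=
  Csum (fun p : qedge c => (val p).1 == orbE c e)
       (fun p => Cmul (coordc (orbE c e) (mxv (rho ((gsel c e false)^-1)%g) w) (val p).2)
                      (a p t)).

Lemma lift_equivariant (X : Type) (a : qedge c -> X -> C) w e t g :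
  lift a (mxv (rho (g^-1)%g) w) (aE (g^-1)%g e) t = lift a w e t.
Proof.
rewrite /lift orbE_act; apply: eq_Csum => p /eqP Hp; congr Cmul.
rewrite -(rho_mul rho_rep) -invMg -Hp; apply: coordc_welldef.
rewrite Hp (aEM act) gselP.
by have := gselP (aE (g^-1)%g e) false; rewrite orbE_act => ->; apply: (aE_Kinv act).
Qed.

Lemma lift_lincomb (X : Type) (a : qedge c -> X -> C) (x : 'I_d -> C)
    (vs : 'I_d -> vec d) e t :
  lift a (lincomb predT x vs) e t = Csum predT (fun j => Cmul (x j) (lift a (vs j) e t)).
Proof.
rewrite /lift mxv_lincomb /coordc (coord_lincomb (bI_basis _)).
under eq_Csum => p _ do rewrite Csum_distrl.
rewrite Csum_exchange; apply: eq_Csum => j _.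
by rewrite Csum_distrr; apply: eq_Csum => p _; rewrite CmulA.
Qed.

Lemma lift_rep (X : Type) (a : qedge c -> X -> C) (p : qedge c) t :
  lift a (bI c (val p).1 (val p).2) (repE c (val p).1) t = a p t.
Proof.
rewrite /lift orbE_rep.
rewrite (eq_Csum (F2 := fun q : qedge c =>
           Cmul (if (val q).2 == (val p).2 then C1 else C0) (a q t))) => [|q /eqP Hq].
  rewrite /Csum (bigD1 p) //= eqxx Cmul1 big1 ?Cadd0r // => q /andP [/eqP H1 H2].
  case E: ((val q).2 == (val p).2); last by rewrite Cmul0l.
  case/eqP: H2; apply: val_inj => /=.
  by rewrite [sval q]surjective_pairing [sval p]surjective_pairing H1 (eqP E).
congr Cmul; rewrite -Hq (coordc_welldef (g2 := 1%g)); last first.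
  by rewrite (aE1 act) Hq; have := gselP (repE c (val p).1) false; rewrite orbE_rep.
by rewrite invg1 (rho_1 rho_rep) Hq /coordc (coord_basis_vec (bI_basis _)).
Qed.

Lemma lift_inj (X : Type) (a a' : qedge c -> X -> C) :
  (forall w e t, lift a w e t = lift a' w e t) -> forall p t, a p t = a' p t.
Proof. by move=> H p t; rewrite -lift_rep H lift_rep. Qed.

Lemma endpt_quot (p : qedge c) s :
  endpt (G := quot_graph c) p s = orbV c (endpt (repE c (val p).1) s).
Proof. by case: s. Qed.

Lemma orbV_endpt e s : orbV c (endpt (repE c (orbE c e)) s) = orbV c (endpt e s).
Proof. by rewrite -[in RHS](gselP e s) (aE_endpt act) orbV_act. Qed.

(* The heart of the recipe: a column of the conditions at v_k, paired with
   data a on the ends of Gamma/R, equals the same column of the conditions at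
   v~_k paired with the lift of a along the global basis vector b_{a0}. *)
Lemma quot_column_sum (Acoef : qE G -> bool -> C) (a : qedge c -> bool -> C) k a0 :
  Csum (fun ps : qedge c * bool => endpt (G := quot_graph c) ps.1 ps.2 == k)
    (fun ps => Cmul (Csum (fun es : qE G * bool =>
                 [&& endpt es.1 es.2 == repV c k, orbE c es.1 == (val ps.1).1 & es.2 == ps.2])
               (fun es => Cmul (Acoef es.1 es.2) (cM c es.1 es.2 (val ps.1).2 a0)))
               (a ps.1 ps.2))
  = Csum (fun es : qE G * bool => endpt es.1 es.2 == repV c k)
      (fun es => Cmul (Acoef es.1 es.2) (lift a (gB c a0) es.1 es.2)).
Proof.
under eq_Csum => ps _ do rewrite Csum_distrl.
rewrite /Csum (exchange_big_dep (fun es : qE G * bool => endpt es.1 es.2 == repV c k));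
  last by move=> ps es _ /and3P [].
apply: eq_bigr => es Hes.
rewrite (eq_bigl (fun ps : qedge c * bool =>
           ((val ps.1).1 == orbE c es.1) && (es.2 == ps.2))) => [|[p s] /=]; last first.
  rewrite Hes [orbE c es.1 == _]eq_sym.
  case E1: ((sval p).1 == orbE c es.1); rewrite ?andbF //.
  case E2: (es.2 == s); rewrite ?andbF //.
  by rewrite andbT endpt_quot (eqP E1) -(eqP E2) orbV_endpt (eqP Hes) orbV_rep eqxx.
rewrite -/(Csum _ _) (Csum_pair_snd (fun p => (val p).1 == orbE c es.1)
  (fun p s => Cmul (Cmul (Acoef es.1 es.2) (cM c es.1 es.2 (val p).2 a0)) (a p s))).
rewrite /lift Csum_distrr; apply: eq_Csum => p /eqP Hp.
rewrite -CmulA cM_coord -Hp; congr (Cmul _ (Cmul _ _)).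
by apply: coordc_welldef; rewrite Hp !gselP.
Qed.

Definition lifted_row k (a b : qedge c -> bool -> C) (r : qRow (repV c k)) (w : vec d) :=
  Csum (fun es : qE G * bool => endpt es.1 es.2 == repV c k)
    (fun es => Cadd (Cmul (qA r es.1 es.2) (lift a w es.1 es.2))
                    (Cmul (qB r es.1 es.2) (lift b w es.1 es.2))).

Lemma lifted_row_lincomb k a b (r : qRow (repV c k)) (x : 'I_d -> C) :
  lifted_row a b r (lincomb predT x (gB c))
  = Csum predT (fun j => Cmul (x j) (lifted_row a b r (gB c j))).
Proof.
rewrite /lifted_row.
under eq_Csum => es _ do rewrite !lift_lincomb !Csum_distrr -Csum_add.
rewrite Csum_exchange; apply: eq_Csum => j _.
by rewrite Csum_distrr; apply: eq_Csum => es _; Cring.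
Qed.

Lemma quot_row k (a b : qedge c -> bool -> C) (r : qRow (repV c k)) a0 :
  Csum (fun ps : qE (quot_graph c) * bool => endpt ps.1 ps.2 == k)
    (fun ps => Cadd (Cmul (qA (q := quot_graph c) ((r, a0) : qRow (q := quot_graph c) k)
                              ps.1 ps.2) (a ps.1 ps.2))
                    (Cmul (qB (q := quot_graph c) ((r, a0) : qRow (q := quot_graph c) k)
                              ps.1 ps.2) (b ps.1 ps.2)))
  = lifted_row a b r (gB c a0).
Proof. by rewrite Csum_add /lifted_row Csum_add /= !quot_column_sum. Qed.

Lemma quot_sat_iff k (a b : qedge c -> bool -> C) :
  sat_at (G := quot_graph c) k a b <-> forall w, sat_at (repV c k) (lift a w) (lift b w).
Proof.
split=> [Hsat w r | Hlift [r a0]]; last by rewrite quot_row; apply: Hlift.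
rewrite -/(lifted_row a b r w) (coordP gB_basis w) lifted_row_lincomb.
by apply: Csum0 => j _; rewrite -quot_row Hsat Cmul0r.
Qed.

(* Globally: data satisfy all conditions of Gamma/R iff all their lifts
   satisfy all conditions of Gamma; equivariance carries the conditions from
   the representatives v~_k to every vertex. *)
Lemma quot_sat_all (a b : qedge c -> bool -> C) :
  (forall k, sat_at (G := quot_graph c) k a b) <->
  (forall v w, sat_at v (lift a w) (lift b w)).
Proof.
split=> [Hsat v w | Hlift k]; last by apply/quot_sat_iff => w; apply: Hlift.
have [g Hg] := proj2 (orbV_spec v (orbV c v)) erefl.
have Hrep := proj1 (quot_sat_iff (orbV c v) a b) (Hsat _) (mxv (rho (g^-1)%g) w).
have := sat_act act (g := g) Hrep.
rewrite Hg; congr sat_at; do 2!apply: functional_extensionality => ?;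
  exact: lift_equivariant.
Qed.

End Quotient.

(** * Comparing two choices *)

Section TwoChoices.
Variables (G : qgraph) (K : finGroupType).
Variables (aV : K -> qV G -> qV G) (aE : K -> qE G -> qE G).
Variables (d : nat) (rho : K -> mat d).
Hypothesis act : is_qaction aV aE.
Hypothesis rho_rep : is_rep rho.
Variables c1 c2 : recipe_choice G K d.
Hypothesis c1_valid : valid_choice aV aE rho c1.
Hypothesis c2_valid : valid_choice aV aE rho c2.

(* If e~_1^{i1} = h e~_2^{i2} (h = g_{e~_1^{i1}} for c2), the entry at
   (e_2^{i2}_{j2}, e_1^{i1}_{j1}) is the j1-th B_1^{i1}-coordinate of
   rho(h) b_2^{i2}_{j2}; edges of different orbits are not mixed. *)
Definition tmatrix : qedge c2 -> qedge c1 -> C := fun p2 p1 =>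
  if orbE c2 (repE c1 (val p1).1) == (val p2).1 then
    coordc (val p1).1 (mxv (rho (gsel c2 (repE c1 (val p1).1) false))
                           (bI c2 (val p2).1 (val p2).2)) (val p1).2
  else C0.

Lemma orbE_same e1 e2 : (orbE c1 e1 == orbE c1 e2) = (orbE c2 e1 == orbE c2 e2).
Proof.
apply/eqP/eqP => [/(proj1 (same_orbit act c1_valid _ _)) E | E].
  exact: (proj2 (same_orbit act c2_valid _ _)).
exact/(proj2 (same_orbit act c1_valid _ _))/(proj1 (same_orbit act c2_valid _ _)).
Qed.

(* The column p1 of the matrix reproduces the coefficient of a(p1) in the lift
   for c1 from the coefficients of the lift for c2. *)
Lemma tmatrix_column e (p1 : qedge c1) w : (val p1).1 = orbE c1 e ->
  Csum (fun p2 : qedge c2 => (val p2).1 == orbE c2 e)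
    (fun p2 => Cmul (coordc (orbE c2 e) (mxv (rho ((gsel c2 e false)^-1)%g) w) (val p2).2)
       (coordc (val p1).1 (mxv (rho (gsel c2 (repE c1 (val p1).1) false))
                               (bI c2 (orbE c2 e) (val p2).2)) (val p1).2))
  = coordc (val p1).1 (mxv (rho ((gsel c1 e false)^-1)%g) w) (val p1).2.
Proof.
move=> Hp1.
set i1 := (val p1).1; set i2 := orbE c2 e.
set h := gsel c2 (repE c1 i1) false.
set y := mxv (rho ((gsel c2 e false)^-1)%g) w.
have {}Hp1 : i1 = orbE c1 e := Hp1.
have Hi2 : orbE c2 (repE c1 i1) = i2.
  by apply/eqP; rewrite /i2 -orbE_same (orbE_rep act c1_valid) Hp1.
have Hh : aE h (repE c2 i2) = repE c1 i1 by rewrite /h -Hi2 (gselP c2_valid).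
(* only the fixed coordinates of y enter the sum *)
have -> : Csum (fun p2 : qedge c2 => (val p2).1 == i2)
    (fun p2 => Cmul (coordc i2 y (val p2).2)
       (coordc i1 (mxv (rho h) (bI c2 i2 (val p2).2)) (val p1).2))
  = coordc i1 (mxv (rho h) (fixpart (dI c2 i2) (bI c2 i2) y)) (val p1).2.
  rewrite (sum_qedge i2 (fun j => Cmul (coordc i2 y j)
             (coordc i1 (mxv (rho h) (bI c2 i2 j)) (val p1).2))).
  by rewrite /fixpart mxv_lincomb /coordc (coord_lincomb (bI_basis c1_valid _)).
(* the nontrivial part of y is carried into the nontrivial isotypic sum of
   e~_1^{i1}, which has no fixed coordinates *)
have Hnt : ntsp aE rho (repE c1 i1) (mxv (rho h) (ntpart (dI c2 i2) (bI c2 i2) y)).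
  rewrite -Hh; apply: (ntsp_transport act rho_rep).
  exact: (ntpart_nt (bI_nt c2_valid _)).
rewrite /coordc.
rewrite -(coord_fixed_add (bI_basis c1_valid _) (bI_nt c1_valid _) _ Hnt (valP p1)).
rewrite -mxv_add -(fix_nt_decomp _ (bI_basis c2_valid _) y) /y -(rho_mul rho_rep).
(* finally rho(h) rho(g_e^-1) = rho(g^-1) for some g with g e~_1^{i1} = e *)
have -> : (h * (gsel c2 e false)^-1 = ((gsel c2 e false) * h^-1)^-1)%g.
  by rewrite invMg invgK.
apply: (coord_welldef act rho_rep (bI_basis c1_valid _) (bI_fix c1_valid _)
                      (bI_nt c1_valid _) _ (valP p1)).
by rewrite (aEM act) -{1}Hh (aE_invK act) (gselP c2_valid) -/i1 Hp1 (gselP c1_valid).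
Qed.

Lemma lift_transfer (X : Type) (a : qedge c1 -> X -> C) w e t :
  lift rho (transfer tmatrix a) w e t = lift rho a w e t.
Proof.
rewrite /lift /transfer.
under eq_Csum => p2 _ do rewrite Csum_distrr.
rewrite Csum_exchange [RHS]Csum_mkcond; apply: eq_Csum => p1 _.
case E: ((val p1).1 == orbE c1 e).
- have Hi : orbE c2 (repE c1 (val p1).1) = orbE c2 e.
    by apply/eqP; rewrite -orbE_same (orbE_rep act c1_valid).
  rewrite -[in RHS](eqP E) -(tmatrix_column w (eqP E)) Csum_distrl.
  apply: eq_Csum => p2 /eqP Hp2.
  by rewrite /tmatrix Hi -Hp2 eqxx CmulA.
- apply: Csum0 => p2 /eqP Hp2; rewrite /tmatrix.
  case: ifP => [E2 | _]; last by rewrite Cmul0l Cmul0r.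
  by move: E2; rewrite Hp2 -orbE_same (orbE_rep act c1_valid) E.
Qed.

(* The matrix only mixes edges of the same orbit, hence of the same length. *)
Lemma tmatrix_len (p2 : qedge c2) (p1 : qedge c1) :
  qlen (q := quot_graph c2) p2 <> qlen (q := quot_graph c1) p1 -> tmatrix p2 p1 = C0.
Proof.
rewrite /tmatrix; case: ifP => // /eqP Hi Hl; case: Hl => /=.
by rewrite -Hi -[in RHS](gselP c2_valid (repE c1 (val p1).1) false) (aE_len act).
Qed.

(* The matrix preserves the vertex conditions: for both choices these say
   that all lifts satisfy the conditions of Gamma, and the lifts agree. *)
Lemma tmatrix_preserves : @preserves_conditions (quot_graph c1) (quot_graph c2) tmatrix.
Proof.
move=> a b Hsat; apply/(quot_sat_all act rho_rep c2_valid) => v w.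
have E (a' : qedge c1 -> bool -> C) : lift rho (transfer tmatrix a') w = lift rho a' w.
  by do 2!apply: functional_extensionality => ?; apply: lift_transfer.
by rewrite !E; apply: (proj1 (quot_sat_all act rho_rep c1_valid a b)).
Qed.

End TwoChoices.

Arguments tmatrix {G K d} rho c1 c2.

Lemma tmatrix_inverse (G : qgraph) (K : finGroupType)
    (aV : K -> qV G -> qV G) (aE : K -> qE G -> qE G) (d : nat) (rho : K -> mat d)
    (c1 c2 : recipe_choice G K d) :
  is_qaction aV aE -> is_rep rho ->
  valid_choice aV aE rho c1 -> valid_choice aV aE rho c2 ->
  forall (X : Type) (a : qedge c1 -> X -> C) p t,
    transfer (tmatrix rho c2 c1) (transfer (tmatrix rho c1 c2) a) p t = a p t.
Proof.
move=> act rho_rep c1_valid c2_valid X a; apply: (lift_inj act rho_rep c1_valid) => w e t.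
by rewrite (lift_transfer act rho_rep c2_valid c1_valid)
           (lift_transfer act rho_rep c1_valid c2_valid).
Qed.

Theorem proposition2 (G : qgraph) (K : finGroupType)
    (aV : K -> qV G -> qV G) (aE : K -> qE G -> qE G)
    (d : nat) (rho : K -> mat d)
    (c1 c2 : recipe_choice G K d) :
  is_qaction aV aE ->
  no_adjacent_map aV ->
  is_rep rho ->
  valid_choice aV aE rho c1 ->
  valid_choice aV aE rho c2 ->
  transplantable (quot_graph c1) (quot_graph c2).
Proof.
move=> act _ rho_rep c1_valid c2_valid.
apply: (@transplantable_of_inverses (quot_graph c1) (quot_graph c2)
                                    (tmatrix rho c1 c2) (tmatrix rho c2 c1)).
- exact: (tmatrix_len act c2_valid).
- exact: (tmatrix_len act c1_valid).
- exact: (tmatrix_preserves act rho_rep c1_valid c2_valid).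
- exact: (tmatrix_preserves act rho_rep c2_valid c1_valid).
- exact: (tmatrix_inverse act rho_rep c1_valid c2_valid).
- exact: (tmatrix_inverse act rho_rep c2_valid c1_valid).
Qed.
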